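(* Let $n\ge 5$ and let $G$ be an almost simple primitive permutation group with socle $G_0=\mathrm{PSU}_n(q)$ acting on the set $X$ of all non-degenerate $1$-dimensional subspaces of the natural module $V_n(q^2)$. Then $\mathrm{diam}(X,G)=2$.
   Context: $V_n(q^2)$ carries a non-degenerate hermitian (unitary) form $f$; a $1$-space $\langle v\rangle$ is non-degenerate iff $f(v,v)\ne 0$. An (undirected) orbital graph of $(X,G)$ is a graph on $X$ whose edge set is a single $G$-orbit on unordered $2$-subsets of $X$, and $\mathrm{diam}(X,G)$ is the maximum diameter of all such orbital graphs. *)

From HB Require Import structures.
From mathcomp Require Import all_boot all_order all_algebra all_fingroup all_solvable.
Set Implicit Arguments. Unset Strict Implicit. Unset Printing Implicit Defensive.
Import GRing.Theory.
Local Open Scope ring_scope.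

Section Unitary.
Variables (p k : nat) (F : finFieldType) (n : nat).

(* q = p^k ; F is meant to be the field of order q^2 *)
Definition qq : nat := (p ^ k)%N.

Definition herm (u v : 'rV[F]_n) : F := \sum_(i < n) u 0 i * (v 0 i) ^+ qq.

Definition span1 (v : 'rV[F]_n) : {set 'rV[F]_n} := [set a *: v | a : F].

Definition Xset : {set {set 'rV[F]_n}} :=
  [set span1 v | v : 'rV[F]_n & herm v v != 0].

Definition slmap (A : 'M[F]_n) (i : nat) (v : 'rV[F]_n) : 'rV[F]_n :=
  map_mx (fun a => a ^+ (p ^ i)) v *m A.

(* (A, x |-> x^(p^i)) is a semisimilarity of the form: an element of GammaU_n(q) *)
Definition semisim (A : 'M[F]_n) (i : nat) : Prop :=
  A \in unitmx /\
  exists2 lam : F, lam != 0 &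
    forall u v, herm (slmap A i u) (slmap A i v) = lam * (herm u v) ^+ (p ^ i).

Definition inSU (A : 'M[F]_n) : Prop :=
  (forall u v, herm (u *m A) (v *m A) = herm u v) /\ \det A = 1.

End Unitary.

Notation Pt p k F n := {x : {set 'rV[F]_n} | x \in Xset p k F n}.

Section Orbital.
Variable T : finType.

Definition within (E : rel T) (d : nat) (u v : T) : Prop :=
  exists s : seq T, (size s <= d)%N /\ path E u s /\ last u s = v.

Definition diam_le (E : rel T) (d : nat) : Prop := forall u v, within E d u v.

Definition orbital (G : {group {perm T}}) (x y : T) : rel T :=
  fun u v => [set u; v] \in orbit ('P^*)%act G [set x; y].

(* diam(X,G) = d (for d >= 1): the maximum diameter of orbital graphs is d *)
Definition diamXG_eq (G : {group {perm T}}) (d : nat) : Prop :=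
  (forall x y : T, x != y -> diam_le (orbital G x y) d) /\
  (exists x y : T, x != y /\ ~ diam_le (orbital G x y) d.-1).

End Orbital.

From HB Require Import structures.
From mathcomp Require Import all_boot all_order all_algebra all_fingroup all_solvable all_field.
From mathcomp Require Import ring zify.
Set Implicit Arguments. Unset Strict Implicit. Unset Printing Implicit Defensive.
Import GRing.Theory.
Local Open Scope ring_scope.

(* Let N(x) = x x^q be the norm from GF(q^2) onto GF(q).  For non-degenerate vectors a, b
   the value N(f(a,b)) / (f(a,a) f(b,b)) depends only on the points <a>, <b> and is
   invariant under SU_n(q).  Conversely, since norm and trace are onto GF(q), orthonormal
   systems extend to SU_n(q)-bases, and this moves any pair of distinct points to a normal
   form (<e_0>, <partner t>) depending on the invariant t alone; so the orbital graph of
   {x, y} contains every pair with the invariant of (x, y).  Two distinct points u, v in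
   normal form have, in the coordinates e_0, ..., e_4 (here n >= 5 is used), a common
   neighbour w distinct from both with that invariant towards each: every orbital graph has
   diameter at most 2.  Semisimilarities preserve orthogonality, so the orbital graph of an
   orthogonal pair misses the non-orthogonal pair (<e_0>, <partner 1>): the diameter is not 1. *)

Section OrbitalGraphs.
Variable T : finType.

Lemma orbital_act (G : {group {perm T}}) x y s : s \in G -> orbital G x y (s x) (s y).
Proof. by move=> sG; apply/orbitP; exists s; rewrite //= setactE imsetU1 imset_set1 /= !apermE. Qed.

Lemma orbitalP (G : {group {perm T}}) x y u v :
  orbital G x y u v -> exists2 s, s \in G & [set s x; s y] = [set u; v].
Proof. by case/orbitP=> s sG; rewrite /= setactE imsetU1 imset_set1 /= !apermE; exists s. Qed.

Lemma within2 (E : rel T) u w v : E u w -> E w v -> within E 2 u v.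
Proof. by move=> uw wv; exists [:: w; v]; rewrite /= uw wv. Qed.

Lemma within1_edge (E : rel T) u v : u != v -> within E 1 u v -> E u v.
Proof.
move=> uv [s [sz [pth lst]]]; case: s sz pth lst => [|w [|//]] _ /=.
  by move=> _ vu; rewrite vu eqxx in uv.
by rewrite andbT => uw <-.
Qed.

End OrbitalGraphs.

Lemma card_le_imset_fibres (T U : finType) (g : T -> U) m :
  (forall y, #|[set x | g x == y]| <= m)%N -> (#|T| <= #|g @: T| * m)%N.
Proof.
move=> fib; have -> : #|T| = \sum_(x : T) 1 by rewrite sum1_card.
rewrite (partition_big g (mem (g @: T))) => [|x _]; last exact: imset_f.
rewrite -sum_nat_const leq_sum // => y _.
by rewrite sum1_card -cardsE fib.
Qed.

Section UnitaryGeometry.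
Variables (p k : nat) (F : finFieldType).
Hypotheses (hp : prime p) (hk : (0 < k)%N) (hF : #|F| = ((p ^ k) ^ 2)%N).

Local Notation q := (qq p k).

Lemma qq_gt1 : (1 < q)%N.
Proof. by rewrite -(exp1n k) ltn_exp2r // prime_gt1. Qed.

Lemma pchar_F : p \in [pchar F].
Proof. by apply: (@card_finPcharP _ p (k * 2)); rewrite // hF expnM. Qed.

Definition conjq (x : F) := x ^+ q.

Fact conjq_is_nmod_morphism : nmod_morphism conjq.
Proof.
split; first by rewrite /conjq expr0n; case: q qq_gt1.
move=> x y; apply: exprDn_pchar.
by rewrite (eq_pnat _ (pcharf_eq pchar_F)) /qq pnatX pnat_id.
Qed.

Fact conjq_is_monoid_morphism : monoid_morphism conjq.
Proof. by split=> [|x y]; rewrite /conjq ?expr1n ?exprMn. Qed.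

HB.instance Definition _ := GRing.isNmodMorphism.Build F F conjq conjq_is_nmod_morphism.
HB.instance Definition _ := GRing.isMonoidMorphism.Build F F conjq conjq_is_monoid_morphism.

(* x ^+ (q * q) = x ^+ #|F| = x *)
Lemma conjqK : involutive conjq.
Proof. by move=> x; rewrite /conjq -exprM mulnn -hF expf_card. Qed.

Lemma conjq0 : conjq 0 = 0. Proof. exact: rmorph0. Qed.
Lemma conjq1 : conjq 1 = 1. Proof. exact: rmorph1. Qed.
Lemma conjqN x : conjq (- x) = - conjq x. Proof. exact: rmorphN. Qed.
Lemma conjqB x y : conjq (x - y) = conjq x - conjq y. Proof. exact: rmorphB. Qed.
Lemma conjqM x y : conjq (x * y) = conjq x * conjq y. Proof. exact: rmorphM. Qed.
Lemma conjqV x : conjq x^-1 = (conjq x)^-1. Proof. exact: fmorphV. Qed.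

Lemma conjq_eq0 x : (conjq x == 0) = (x == 0).
Proof. by rewrite fmorph_eq0. Qed.

Definition nrm (x : F) := x * conjq x.
Definition tr (x : F) := x + conjq x.

Lemma conjq_nrm x : conjq (nrm x) = nrm x.
Proof. by rewrite rmorphM /= conjqK mulrC. Qed.

Lemma conjq_tr x : conjq (tr x) = tr x.
Proof. by rewrite rmorphD /= conjqK addrC. Qed.

Lemma nrm_eq0 x : (nrm x == 0) = (x == 0).
Proof. by rewrite mulf_eq0 conjq_eq0 orbb. Qed.

Lemma nrmM x y : nrm (x * y) = nrm x * nrm y.
Proof. by rewrite /nrm rmorphM /=; ring. Qed.

Lemma nrmV x : nrm x^-1 = (nrm x)^-1.
Proof. by rewrite /nrm fmorphV invfM. Qed.

Lemma nrm_conjq x : nrm (conjq x) = nrm x.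
Proof. by rewrite /nrm conjqK mulrC. Qed.

Lemma card_roots_le (P : {poly F}) : P != 0 -> (#|[set x | root P x]| < size P)%N.
Proof.
move=> nzP; rewrite cardE max_poly_roots ?enum_uniq //.
by apply/allP=> x; rewrite mem_enum inE.
Qed.

Lemma card_conjq_fixed : (#|[set x : F | conjq x == x]| <= q)%N.
Proof.
have sz : size ('X^q - 'X : {poly F}) = q.+1.
  by rewrite size_polyDl ?size_polyXn // size_polyN size_polyX ltnS qq_gt1.
have nz : ('X^q - 'X : {poly F}) != 0 by rewrite -size_poly_gt0 sz.
rewrite -ltnS -sz (leq_ltn_trans _ (card_roots_le nz)) // subset_leq_card //.
by apply/subsetP=> x; rewrite !inE rootE !hornerE subr_eq0.
Qed.

Lemma conjq_fixed_onto (g : F -> F) m :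
  (forall x, conjq (g x) = g x) -> (forall y, #|[set x | g x == y]| <= m)%N ->
  (q.-1 * m < q * q)%N -> forall y, conjq y = y -> exists x, g x = y.
Proof.
move=> g_fixed fib qm y y_fixed.
have img_sub : g @: F \subset [set x | conjq x == x].
  by apply/subsetP=> _ /imsetP[x _ ->]; rewrite inE g_fixed.
have img_ge : (q <= #|g @: F|)%N.
  have le_qq : (q * q <= #|g @: F| * m)%N by rewrite mulnn -hF card_le_imset_fibres.
  by have := qq_gt1; nia.
have/eqP img_eq : g @: F == [set x | conjq x == x].
  by rewrite eqEcard img_sub (leq_trans card_conjq_fixed).
have : y \in g @: F by rewrite img_eq inE y_fixed.
by case/imsetP=> x _ ->; exists x.
Qed.

Lemma nrm_onto y : conjq y = y -> exists x, nrm x = y.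
Proof.
apply: (@conjq_fixed_onto _ q.+1 conjq_nrm) => [c|]; last by case: q qq_gt1 => // r _ /=; nia.
have sz : size ('X^(q.+1) - c%:P : {poly F}) = q.+2 by rewrite size_XnsubC.
have nz : ('X^(q.+1) - c%:P : {poly F}) != 0 by rewrite -size_poly_gt0 sz.
rewrite -ltnS -sz (leq_ltn_trans _ (card_roots_le nz)) // subset_leq_card //.
by apply/subsetP=> x; rewrite !inE rootE !hornerE subr_eq0 exprS.
Qed.

Lemma tr_onto y : conjq y = y -> exists x, tr x = y.
Proof.
apply: (@conjq_fixed_onto _ q conjq_tr) => [c|]; last by case: q qq_gt1 => // r _ /=; nia.
have sz : size ('X^q + 'X - c%:P : {poly F}) = q.+1.
  by rewrite -addrA size_polyDl ?size_polyXn // size_XsubC ltnS qq_gt1.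
have nz : ('X^q + 'X - c%:P : {poly F}) != 0 by rewrite -size_poly_gt0 sz.
rewrite -ltnS -sz (leq_ltn_trans _ (card_roots_le nz)) // subset_leq_card //.
by apply/subsetP=> x; rewrite !inE rootE !hornerE subr_eq0 addrC.
Qed.

Definition nrm_pre (y : F) : F := odflt 0 [pick x | nrm x == y].

Lemma nrm_preK y : conjq y = y -> nrm (nrm_pre y) = y.
Proof.
case/nrm_onto=> x <-; rewrite /nrm_pre.
by case: pickP => [z /eqP //|/(_ x)]; rewrite eqxx.
Qed.

Section Space.
Variable n : nat.

Local Notation V := 'rV[F]_n.
Local Notation f := (@herm p k F n).

Lemma hermE (u v : V) : f u v = \sum_i u 0 i * conjq (v 0 i).
Proof. by []. Qed.

Lemma hermDl u v w : f (u + v) w = f u w + f v w.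
Proof. by rewrite !hermE -big_split; apply: eq_bigr => i _; rewrite mxE mulrDl. Qed.

Lemma hermZl a u v : f (a *: u) v = a * f u v.
Proof. by rewrite !hermE mulr_sumr; apply: eq_bigr => i _; rewrite mxE mulrA. Qed.

Lemma hermC u v : f v u = conjq (f u v).
Proof.
by rewrite !hermE rmorph_sum; apply: eq_bigr => i _; rewrite rmorphM /= conjqK mulrC.
Qed.

Lemma hermDr u v w : f u (v + w) = f u v + f u w.
Proof. by rewrite hermC hermDl rmorphD /= -!hermC. Qed.

Lemma hermZr a u v : f u (a *: v) = conjq a * f u v.
Proof. by rewrite hermC hermZl rmorphM /= -hermC. Qed.

Lemma hermBl u v w : f (u - v) w = f u w - f v w.
Proof. by rewrite hermDl -scaleN1r hermZl mulN1r. Qed.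

Lemma hermBr u v w : f u (v - w) = f u v - f u w.
Proof. by rewrite hermC hermBl rmorphB /= -!hermC. Qed.

Lemma herm0l v : f 0 v = 0.
Proof. by rewrite -(scale0r 0) hermZl mul0r. Qed.

Lemma herm_suml I (r : seq I) (P : pred I) (G : I -> V) v :
  f (\sum_(i <- r | P i) G i) v = \sum_(i <- r | P i) f (G i) v.
Proof. exact: (big_morph (f^~ v) (fun x y => hermDl x y v) (herm0l v)). Qed.

Lemma herm_sumr I (r : seq I) (P : pred I) (G : I -> V) v :
  f v (\sum_(i <- r | P i) G i) = \sum_(i <- r | P i) f v (G i).
Proof. by rewrite hermC herm_suml rmorph_sum; apply: eq_bigr => i _; rewrite [RHS]hermC. Qed.

Lemma conjq_hermxx v : conjq (f v v) = f v v.
Proof. by rewrite -hermC. Qed.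

Lemma herm_eq0C u v : f u v = 0 -> f v u = 0.
Proof. by move=> fuv; rewrite hermC fuv rmorph0. Qed.

Definition evec (i : 'I_n) : V := delta_mx 0 i.

Lemma evec_coord i j : evec i 0 j = (i == j)%:R.
Proof. by rewrite mxE eqxx eq_sym. Qed.

Lemma herm_evecl i v : f (evec i) v = conjq (v 0 i).
Proof.
rewrite hermE (bigD1 i) //= big1 => [|j /negbTE ji]; last by rewrite evec_coord eq_sym ji mul0r.
by rewrite evec_coord eqxx mul1r addr0.
Qed.

Lemma herm_evecr i v : f v (evec i) = v 0 i.
Proof. by rewrite hermC herm_evecl conjqK. Qed.

Lemma herm_evec i j : f (evec i) (evec j) = (i == j)%:R.
Proof. by rewrite herm_evecr evec_coord. Qed.

Lemma evec_mulmx (A : 'M[F]_n) i : evec i *m A = row i A.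
Proof. by rewrite rowE. Qed.

Definition adjmx m l (M : 'M[F]_(m, l)) : 'M[F]_(l, m) := (map_mx conjq M)^T.

Definition unitarymx (A : 'M[F]_n) := A *m adjmx A = 1%:M.

Lemma mulmx_adjE (A : 'M[F]_n) i j : (A *m adjmx A) i j = f (row i A) (row j A).
Proof. by rewrite hermE mxE; apply: eq_bigr => l _; rewrite !mxE. Qed.

Lemma unitarymx_rows (A : 'M[F]_n) :
  (forall i j, f (row i A) (row j A) = (i == j)%:R) -> unitarymx A.
Proof. by move=> orthA; apply/matrixP => i j; rewrite mulmx_adjE orthA mxE. Qed.

Lemma unitarymx_herm A u v : unitarymx A -> f (u *m A) (v *m A) = f u v.
Proof.
have hermM w z : f w z = (w *m adjmx z) 0 0.
  by rewrite hermE mxE; apply: eq_bigr => i _; rewrite !mxE.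
move=> UA; rewrite !hermM /adjmx map_mxM trmx_mul mulmxA -(mulmxA u).
by rewrite -/(adjmx A) UA mulmx1.
Qed.

Lemma unitarymx_det A : unitarymx A -> nrm (\det A) = 1.
Proof.
by move/(congr1 determinant); rewrite det_mulmx /adjmx det_tr det_map_mx det1.
Qed.

Lemma inSU_unit (A : 'M[F]_n) : inSU p k A -> A \in unitmx.
Proof. by case=> _ dA; rewrite unitmxE dA unitr1. Qed.

Lemma inSU_mul (A B : 'M[F]_n) : inSU p k A -> inSU p k B -> inSU p k (A *m B).
Proof.
case=> hA dA [hB dB]; split; last by rewrite det_mulmx dA dB mulr1.
by move=> u v; rewrite !mulmxA hB hA.
Qed.

Lemma inSU_inv (A : 'M[F]_n) : inSU p k A -> inSU p k (invmx A).
Proof.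
move=> SA; have uA := inSU_unit SA; case: SA => hA dA; split.
  by move=> u v; rewrite -hA !mulmxKV.
by rewrite det_inv dA invr1.
Qed.

Definition ortho_seq (s : seq V) := forall i j, (i < size s)%N -> (j < size s)%N ->
  f (nth 0 s i) (nth 0 s j) = (i == j)%:R.

Definition perp_seq (s : seq V) (v : V) := forall i, (i < size s)%N -> f v (nth 0 s i) = 0.

Lemma perp_seqD s u v : perp_seq s u -> perp_seq s v -> perp_seq s (u + v).
Proof. by move=> su sv i si; rewrite hermDl su // sv // addr0. Qed.

Lemma perp_seqZ s a v : perp_seq s v -> perp_seq s (a *: v).
Proof. by move=> sv i si; rewrite hermZl sv // mulr0. Qed.

Lemma ortho_rcons s v : ortho_seq s -> perp_seq s v -> f v v = 1 -> ortho_seq (rcons s v).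
Proof.
move=> os sv vv i j; rewrite size_rcons !ltnS leq_eqVlt [(j <= _)%N]leq_eqVlt.
case/orP=> [/eqP->|si]; case/orP=> [/eqP->|sj]; rewrite !nth_rcons ?ltnn ?eqxx ?si ?sj //.
- by rewrite sv // gtn_eqF.
- by rewrite herm_eq0C ?sv // ltn_eqF.
- exact: os.
Qed.

Lemma exists_perp_seq s : (size s < n)%N -> exists2 w : V, w != 0 & perp_seq s w.
Proof.
move=> sn; pose M : 'M[F]_(n, size s) := \matrix_(l, j) conjq ((nth 0 s j) 0 l).
have /rowV0Pn[w /sub_kermxP wM w0] : kermx M != 0.
  by rewrite -mxrank_eq0 mxrank_ker subn_eq0 -ltnNge (leq_ltn_trans (rank_leq_col M)).
exists w => // j sj; have /rowP/(_ (Ordinal sj)) := wM.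
by rewrite !mxE => <-; apply: eq_bigr => l _; rewrite mxE.
Qed.

Lemma exists_coord_neq0 (w : V) : w != 0 -> exists j, w 0 j != 0.
Proof.
move=> w0; apply/existsP; apply: contraR w0 => /existsPn w0.
by apply/eqP/rowP => j; rewrite mxE; apply/eqP/negbNE.
Qed.

Definition perp_proj (s : seq V) (z : V) :=
  z - \sum_(i < size s) f z (nth 0 s i) *: nth 0 s i.

Lemma perp_projP s z : ortho_seq s -> perp_seq s (perp_proj s z).
Proof.
move=> os j sj; rewrite /perp_proj hermBl herm_suml.
rewrite (bigD1 (Ordinal sj)) //= hermZl os // eqxx mulr1 big1 ?addr0 ?subrr // => i ij.
by rewrite hermZl os // (negbTE (ij : (i : nat) != j)) mulr0.
Qed.

Lemma herm_perp_proj s w z : perp_seq s w -> f w (perp_proj s z) = f w z.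
Proof.
move=> sw; rewrite /perp_proj hermBr herm_sumr big1 ?subr0 // => i _.
by rewrite hermZr sw // mulr0.
Qed.

Lemma unit_scale (v : V) : f v v != 0 -> exists2 l, l != 0 & f (l *: v) (l *: v) = 1.
Proof.
move=> vv; have hl : nrm (nrm_pre (f v v)^-1) = (f v v)^-1.
  by rewrite nrm_preK // conjqV conjq_hermxx.
exists (nrm_pre (f v v)^-1); last by rewrite hermZl hermZr mulrA -/(nrm _) hl mulVf.
by rewrite -nrm_eq0 hl invr_eq0.
Qed.

Lemma exists_pairing s w : ortho_seq s -> perp_seq s w -> w != 0 ->
  exists2 z, perp_seq s z & f w z = 1.
Proof.
move=> os sw w0; have [j wj] := exists_coord_neq0 w0.
exists (conjq (w 0 j)^-1 *: perp_proj s (evec j)); first exact/perp_seqZ/perp_projP.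
by rewrite hermZr conjqK herm_perp_proj // herm_evecr mulVf.
Qed.

Lemma hyperbolic_unit s w : ortho_seq s -> perp_seq s w -> w != 0 -> f w w = 0 ->
  exists v, [/\ perp_seq s v, f v v = 1 & f w v = 1].
Proof.
move=> os sw w0 ww; have [z sz wz] := exists_pairing os sw w0.
have [mu trmu] : exists mu, tr mu = 1 - f z z.
  by apply: tr_onto; rewrite conjqB conjq1 conjq_hermxx.
exists (z + mu *: w); split; first exact/perp_seqD/perp_seqZ.
  rewrite hermDl !hermDr !hermZl !hermZr ww [f z w]hermC wz conjq1 !mulr0 !mulr1 addr0.
  by rewrite -addrA [conjq mu + mu]addrC -[mu + conjq mu]/(tr mu) trmu addrC subrK.
by rewrite hermDr hermZr ww mulr0 addr0.
Qed.

Lemma ortho_seq_ext s : ortho_seq s -> (size s < n)%N -> exists v, ortho_seq (rcons s v).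
Proof.
move=> os sn; have [w w0 sw] := exists_perp_seq sn.
have [v [sv vv]] : exists v, perp_seq s v /\ f v v != 0.
  case: (eqVneq (f w w) 0) => [ww|]; last by exists w.
  by have [v [sv vv _]] := hyperbolic_unit os sw w0 ww; exists v; rewrite vv oner_eq0.
have [l l0 lv] := unit_scale vv.
by exists (l *: v); apply: ortho_rcons => //; apply: perp_seqZ.
Qed.

Lemma ortho_seq_full s : ortho_seq s -> (size s <= n)%N ->
  exists t, ortho_seq (s ++ t) /\ size (s ++ t) = n.
Proof.
move Hd: (n - size s)%N => d; elim: d s Hd => [|d IH] s Hd os sn.
  by exists [::]; rewrite cats0; split=> //; apply/eqP; rewrite eqn_leq sn -subn_eq0 Hd.
have sn' : (size s < n)%N by rewrite -subn_gt0 Hd.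
have [v ov] := ortho_seq_ext os sn'.
have [||t [ot st]] := IH (rcons s v) _ ov; rewrite ?size_rcons ?subnS ?Hd //.
by exists (v :: t); rewrite -cat_rcons.
Qed.

Lemma unitarymx_diag_mul (B : 'M[F]_n) (d : 'rV[F]_n) :
  unitarymx B -> (forall i, nrm (d 0 i) = 1) -> unitarymx (diag_mx d *m B).
Proof.
move=> UB nd; apply: unitarymx_rows => i j.
rewrite !row_mul !row_diag_mx -!scalemxAl -!rowE hermZl hermZr -mulmx_adjE UB mxE.
by case: eqVneq => [->|_]; rewrite ?mulr0 // mulr1 -/(nrm _) nd.
Qed.

(* The free row [size s] is rescaled by (det B)^-1, which has norm 1, to get determinant 1. *)
Lemma inSU_extend s : ortho_seq s -> (size s < n)%N ->
  exists A, inSU p k A /\ forall i : 'I_n, (i < size s)%N -> row i A = nth 0 s i.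
Proof.
move=> os sn; have [t [ost st]] := ortho_seq_full os (ltnW sn).
pose B : 'M[F]_n := \matrix_(i, j) (nth 0 (s ++ t) i) 0 j.
have rowB i : row i B = nth 0 (s ++ t) i by apply/rowP => j; rewrite !mxE.
have UB : unitarymx B by apply: unitarymx_rows => i j; rewrite !rowB ost ?st.
have detB : \det B != 0.
  by apply: contra_eq_neq (unitarymx_det UB) => ->; rewrite /nrm mul0r eq_sym oner_neq0.
pose d : 'rV[F]_n := \row_j (if j == Ordinal sn then (\det B)^-1 else 1).
have nd i : nrm (d 0 i) = 1.
  by rewrite mxE; case: ifP => _; rewrite ?nrmV ?unitarymx_det ?invr1 // /nrm conjq1 mulr1.
exists (diag_mx d *m B); split; first split.
- by move=> u v; apply/unitarymx_herm/unitarymx_diag_mul.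
- rewrite det_mulmx det_diag (bigD1 (Ordinal sn)) //= big1 => [|i /negbTE ne].
    by rewrite mxE eqxx mulr1 mulVf.
  by rewrite mxE ne.
- move=> i si; rewrite row_mul row_diag_mx -scalemxAl -rowE rowB nth_cat si mxE.
  by rewrite ifN ?scale1r // -val_eqE /= ltn_eqF.
Qed.

Definition pinv (a b : V) := nrm (f a b) / (f a a * f b b).

Lemma conjq_pinv a b : conjq (pinv a b) = pinv a b.
Proof. by rewrite /pinv conjqM conjqV conjqM conjq_nrm !conjq_hermxx. Qed.

Lemma pinvZ a b l m : l != 0 -> m != 0 -> pinv (l *: a) (m *: b) = pinv a b.
Proof.
move=> l0 m0; rewrite /pinv !hermZl !hermZr !nrmM nrm_conjq.
have -> : l * (conjq l * f a a) * (m * (conjq m * f b b)) = nrm l * nrm m * (f a a * f b b).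
  by rewrite /nrm; ring.
by rewrite mulrA -mulf_div divff ?mul1r // mulf_neq0 // nrm_eq0.
Qed.

Lemma pinv_mulmx (A : 'M[F]_n) a b : (forall u v, f (u *m A) (v *m A) = f u v) ->
  pinv (a *m A) (b *m A) = pinv a b.
Proof. by move=> hA; rewrite /pinv !hA. Qed.

Lemma mem_span1 (v : V) : v \in span1 v.
Proof. by apply/imsetP; exists 1; rewrite ?scale1r. Qed.

Lemma span1Z l (v : V) : l != 0 -> span1 (l *: v) = span1 v.
Proof.
move=> l0; apply/setP => u; apply/imsetP/imsetP => [[a _ ->]|[a _ ->]].
  by exists (a * l); rewrite ?scalerA.
by exists (a / l); rewrite ?scalerA ?divfK.
Qed.

Lemma span1_mulmx (A : 'M[F]_n) (v : V) : (fun u => u *m A) @: span1 v = span1 (v *m A).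
Proof.
apply/setP => u; apply/imsetP/imsetP => [[_ /imsetP[a _ ->] ->]|[a _ ->]].
  by exists a; rewrite ?scalemxAl.
by exists (a *: v); [apply/imsetP; exists a | rewrite scalemxAl].
Qed.

Lemma span1_mulmxK (A : 'M[F]_n) (a b : V) :
  A \in unitmx -> span1 (a *m A) = span1 (b *m A) -> span1 a = span1 b.
Proof.
move=> uA AaAb; rewrite -[a](mulmxK uA) -[b](mulmxK uA).
by rewrite -(span1_mulmx (invmx A) (a *m A)) AaAb span1_mulmx.
Qed.

Lemma span1_scaled (a b : V) : span1 a = span1 b -> b != 0 -> exists2 c, c != 0 & b = c *: a.
Proof.
move=> ab b0; have /imsetP[c _ bE] : b \in span1 a by rewrite ab mem_span1.
by exists c => //; apply: contraNneq b0 => c0; rewrite bE c0 scale0r.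
Qed.

Lemma pinv_span1 (a b a' b' : V) : span1 a = span1 a' -> span1 b = span1 b' ->
  a' != 0 -> b' != 0 -> pinv a' b' = pinv a b.
Proof.
move=> aa' bb' a'0 b'0; have [c c0 ->] := span1_scaled aa' a'0.
by have [d d0 ->] := span1_scaled bb' b'0; rewrite pinvZ.
Qed.

Lemma hermxx_neq0_vec (v : V) : f v v != 0 -> v != 0.
Proof. by apply: contraNneq => ->; rewrite herm0l. Qed.

Local Notation point := (Pt p k F n).

Lemma span1_Xset (v : V) : f v v != 0 -> span1 v \in Xset p k F n.
Proof. by move=> vv; apply/imsetP; exists v; rewrite ?inE. Qed.

Definition mkpoint (v : V) (vv : f v v != 0) : point := exist _ (span1 v) (span1_Xset vv).

Definition ptvec (x : point) : V := odflt 0 [pick v | (f v v != 0) && (span1 v == val x)].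

Lemma ptvecP (x : point) : f (ptvec x) (ptvec x) != 0 /\ val x = span1 (ptvec x).
Proof.
have [v + xE] := imsetP (valP x); rewrite inE => vv.
rewrite /ptvec; case: pickP => [w /andP[ww /eqP wx]|/(_ v)/negbT].
  by split=> //=; exact: esym wx.
by rewrite negb_and => /orP[/negP[]|/eqP[]]; [exact: vv | exact: esym xE].
Qed.

Definition ptinv (x y : point) := pinv (ptvec x) (ptvec y).

Lemma ptinvE (x y : point) a b : val x = span1 a -> val y = span1 b -> ptinv x y = pinv a b.
Proof.
have [xx xE] := ptvecP x; have [yy yE] := ptvecP y.
move=> xa yb; apply: pinv_span1; rewrite -?xE -?yE // hermxx_neq0_vec //.
Qed.

Lemma semisim_orth (A : 'M[F]_n) i (a b r s : V) : semisim p k A i -> f a b = 0 ->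
  r \in slmap p A i @: span1 a -> s \in slmap p A i @: span1 b -> f r s = 0.
Proof.
case=> _ [lam _ hlam] ab /imsetP[_ /imsetP[c _ ->] ->] /imsetP[_ /imsetP[d _ ->] ->].
have slmapZ e (v : V) : slmap p A i (e *: v) = e ^+ (p ^ i) *: slmap p A i v.
  by rewrite /slmap scalemxAl; congr (_ *m _); apply/rowP => j; rewrite !mxE exprMn.
by rewrite !slmapZ hermZl hermZr hlam ab expr0n expn_eq0 eqn0Ngt prime_gt0 //= !mulr0.
Qed.

Section FiveDims.
Hypothesis hn : (5 <= n)%N.

Definition oo (j : nat) (h : (j < 5)%N) : 'I_n := Ordinal (leq_trans h hn).
Definition o0 := oo (isT : (0 < 5)%N).
Definition o1 := oo (isT : (1 < 5)%N).
Definition o2 := oo (isT : (2 < 5)%N).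
Definition o3 := oo (isT : (3 < 5)%N).
Definition o4 := oo (isT : (4 < 5)%N).

Lemma oo_eq j j' (h : (j < 5)%N) (h' : (j' < 5)%N) : (oo h == oo h') = (j == j').
Proof. by rewrite -val_eqE. Qed.

Definition omega := nrm_pre (-1).

Lemma nrm_omega : nrm omega = -1.
Proof. by rewrite nrm_preK // conjqN conjq1. Qed.

Lemma omega_neq0 : omega != 0.
Proof. by rewrite -nrm_eq0 nrm_omega oppr_eq0 oner_eq0. Qed.

(* Normal form of a nonzero vector of norm s orthogonal to e_0; for s = 0 it is isotropic,
   which needs two coordinates and N(omega) = -1. *)
Definition tailv (s : F) : V :=
  if s == 0 then evec o1 + omega *: evec o2 else nrm_pre s *: evec o1.

Definition partner (t : F) : V :=
  if t == 0 then evec o1 else evec o0 + tailv (t^-1 - 1).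

Lemma tailv_coord s i : i != o1 -> i != o2 -> tailv s 0 i = 0.
Proof.
move=> /negbTE i1 /negbTE i2; rewrite /tailv; case: ifP => _;
  by rewrite !mxE /= ?i1 ?i2 ?mulr0 ?addr0.
Qed.

Lemma tailv_props s : conjq s = s ->
  f (tailv s) (tailv s) = s /\ tailv s 0 o1 != 0.
Proof.
move=> sfix; rewrite /tailv; case: (eqVneq s 0) => [->|s0].
  rewrite !hermDl !hermDr !hermZl !hermZr !herm_evec !oo_eq /= !mulr0 !mulr1.
  by rewrite -/(nrm _) nrm_omega !mxE !oo_eq /= mulr0 !addr0 add0r subrr oner_eq0.
rewrite hermZl hermZr herm_evec eqxx mulr1 -/(nrm _) nrm_preK // !mxE eqxx mulr1.
by rewrite -nrm_eq0 nrm_preK.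
Qed.

Lemma tailv_coord0 s : tailv s 0 o0 = 0.
Proof. by rewrite tailv_coord // oo_eq. Qed.

Lemma partner_coord t i : i != o0 -> i != o1 -> i != o2 -> partner t 0 i = 0.
Proof.
move=> i0 i1 i2; rewrite /partner; case: ifP => _; first by rewrite mxE (negbTE i1).
by rewrite mxE tailv_coord // mxE (negbTE i0) add0r.
Qed.

Lemma partner_coord0 t : t != 0 -> partner t 0 o0 = 1.
Proof. by move=> t0; rewrite /partner (negbTE t0) mxE tailv_coord0 mxE eqxx addr0. Qed.

Lemma partner_props t : conjq t = t ->
  f (partner t) (partner t) != 0 /\ partner t 0 o1 != 0.
Proof.
move=> tfix; rewrite /partner; case: (eqVneq t 0) => [_|t0].
  by rewrite herm_evec !mxE !eqxx oner_eq0.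
have sfix : conjq (t^-1 - 1) = t^-1 - 1 by rewrite conjqB conjqV tfix conjq1.
have [tt t1] := tailv_props sfix.
rewrite hermDl !hermDr herm_evec eqxx herm_evecl herm_evecr tailv_coord0 tt.
by rewrite conjq0 addr0 add0r addrC subrK invr_eq0 !mxE oo_eq /= add0r.
Qed.

Lemma ortho_seq1 a : f a a = 1 -> ortho_seq [:: a].
Proof. by move=> aa [|i] [|j]. Qed.

Lemma tail_model (a b : V) : f a a = 1 -> f b a = 0 -> b != 0 ->
  exists A, [/\ inSU p k A, evec o0 *m A = a & tailv (f b b) *m A = b].
Proof.
move=> aa ba b0; have oa := ortho_seq1 aa.
have sb : perp_seq [:: a] b by case.
rewrite /tailv; case: (eqVneq (f b b) 0) => [bb|bb].
  have [v [sv vv bv]] := hyperbolic_unit oa sb b0 bb.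
  pose u := omega^-1 *: (b - v).
  have su : perp_seq [:: a; v] u.
    case=> [|[]] //= _; rewrite hermZl hermBl; last by rewrite bv vv subrr mulr0.
    by rewrite ba (sv 0%N) // subrr mulr0.
  have uu : f u u = 1.
    rewrite hermZl hermZr hermBl !hermBr bb bv vv [f v b]hermC bv conjq1 mulrA.
    by rewrite -[_ * conjq _]/(nrm _) nrmV nrm_omega invrN1 subrr subr0 sub0r mulrNN mulr1.
  have ov : ortho_seq [:: a; v] by apply: (ortho_rcons oa).
  have [|A [SA rA]] := inSU_extend (ortho_rcons ov su uu); first by rewrite (leq_trans _ hn).
  exists A; split=> //; first by rewrite evec_mulmx (rA o0).
  rewrite mulmxDl -scalemxAl !evec_mulmx (rA o1) // (rA o2) //=.
  by rewrite scalerA mulfV ?omega_neq0 // scale1r addrC subrK.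
have sfix : conjq (f b b) = f b b by rewrite conjq_hermxx.
pose l := (nrm_pre (f b b))^-1.
have ll : f (l *: b) (l *: b) = 1.
  by rewrite hermZl hermZr mulrA -[_ * conjq _]/(nrm _) nrmV nrm_preK ?mulVf.
have ol : ortho_seq [:: a; l *: b] by apply: (ortho_rcons oa); first exact: perp_seqZ.
have [|A [SA rA]] := inSU_extend ol; first by rewrite (leq_trans _ hn).
exists A; split=> //; first by rewrite evec_mulmx (rA o0).
rewrite -scalemxAl evec_mulmx (rA o1) //= scalerA mulfV ?scale1r //.
by rewrite -nrm_eq0 nrm_preK.
Qed.

Lemma pair_model (a b : V) : f a a != 0 -> f b b != 0 -> span1 a != span1 b ->
  exists A, [/\ inSU p k A, span1 (evec o0 *m A) = span1 a
              & span1 (partner (pinv a b) *m A) = span1 b].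
Proof.
move=> aa bb ab; have [la la0 a1a1] := unit_scale aa.
move: (la *: a) a1a1 (span1Z a la0) => a1 a1a1 a1a; have oa1 := ortho_seq1 a1a1.
have a1_neq0 : a1 != 0 by rewrite hermxx_neq0_vec // a1a1 oner_eq0.
have [ba1|ba1] := eqVneq (f b a1) 0.
  have t0 : pinv a b = 0.
    rewrite (pinv_span1 a1a (erefl (span1 b))) ?hermxx_neq0_vec //.
    by rewrite /pinv hermC ba1 conjq0 /nrm !mul0r.
  have [lb lb0 b1b1] := unit_scale bb.
  have ob : ortho_seq [:: a1; lb *: b].
    by apply: (ortho_rcons oa1) => // -[|//] _ /=; rewrite hermZl ba1 mulr0.
  have [|A [SA rA]] := inSU_extend ob; first by rewrite (leq_trans _ hn).
  exists A; split=> //; first by rewrite evec_mulmx (rA o0).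
  by rewrite t0 /partner eqxx evec_mulmx (rA o1) // span1Z.
have b2b2 : f ((f b a1)^-1 *: b) ((f b a1)^-1 *: b) != 0.
  by rewrite hermZl hermZr !mulf_neq0 ?conjq_eq0 ?invr_eq0.
have b2a1 : f ((f b a1)^-1 *: b) a1 = 1 by rewrite hermZl mulVf.
have b2b : span1 ((f b a1)^-1 *: b) = span1 b by rewrite span1Z ?invr_eq0.
move: ((f b a1)^-1 *: b) b2b2 b2a1 b2b => b2 b2b2 b2a1 b2b.
have b3a1 : f (b2 - a1) a1 = 0 by rewrite hermBl b2a1 a1a1 subrr.
have b3b3 : f (b2 - a1) (b2 - a1) = f b2 b2 - 1.
  by rewrite hermBl !hermBr b2a1 a1a1 [f a1 b2]hermC b2a1 conjq1 subrr subr0.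
have tE : pinv a b = (f b2 b2)^-1.
  rewrite (pinv_span1 a1a b2b) ?hermxx_neq0_vec //.
  by rewrite /pinv a1a1 [f a1 b2]hermC b2a1 /nrm !conjq1 !mul1r.
have b3_neq0 : b2 - a1 != 0.
  by apply: contra ab; rewrite subr_eq0 -a1a -b2b => /eqP->.
have [A [SA A0 Atail]] := tail_model a1a1 b3a1 b3_neq0.
exists A; split=> //; first by rewrite A0.
rewrite tE /partner invr_eq0 (negbTE b2b2) invrK -b3b3 mulmxDl A0 Atail addrC subrK.
exact: b2b.
Qed.

(* For t != 0 take w = e_0 + x e_1 + e_3 + y e_4: x adjusts f(w, d), y adjusts f(w, w). *)
Lemma common_neighbour t d : conjq t = t -> f d d != 0 -> d 0 o1 != 0 -> d 0 o3 = 0 ->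
  d 0 o4 = 0 -> exists w, [/\ f w w != 0, pinv (evec o0) w = t, pinv w d = t & w 0 o3 = 1].
Proof.
move=> tfix dd d1 d3 d4; have [->|t0] := eqVneq t 0.
  exists (evec o3); rewrite herm_evec eqxx oner_eq0 evec_coord eqxx; split=> //.
    by rewrite /pinv herm_evec oo_eq /nrm !mul0r.
  by rewrite /pinv herm_evecl d3 conjq0 /nrm !mul0r.
pose g := nrm_pre (f d d).
pose x := (g - conjq (d 0 o0)) / conjq (d 0 o1).
pose y := nrm_pre (t^-1 - nrm x - 2%:R).
have ny : nrm y = t^-1 - nrm x - 2%:R.
  by rewrite nrm_preK // !conjqB conjqV tfix conjq_nrm rmorph_nat.
pose w := evec o0 + x *: evec o1 + evec o3 + y *: evec o4.
have ww : f w w = t^-1.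
  rewrite !hermDl !hermDr !hermZl !hermZr !herm_evec !oo_eq /= !mulr0 !mulr1 !addr0 !add0r.
  by rewrite -!/(nrm _) ny; ring.
have wd : f w d = g.
  rewrite !hermDl !hermZl !herm_evecl d3 d4 conjq0 mulr0 !addr0 /x divfK ?conjq_eq0 //.
  by rewrite addrC subrK.
exists w; split.
- by rewrite ww invr_eq0.
- rewrite /pinv herm_evecl !mxE /= !mulr0 !addr0 herm_evec eqxx ww conjq1.
  by rewrite /nrm conjq1 !mul1r invrK.
- by rewrite /pinv wd ww nrm_preK ?conjq_hermxx // invfM invrK mulrC divfK.
- by rewrite !mxE !oo_eq /= !mulr0 !addr0 add0r.
Qed.

Lemma span1_mulmx_eq (B : 'M[F]_n) (a b : V) : span1 a = span1 b -> span1 (a *m B) = span1 (b *m B).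
Proof. by move=> ab; rewrite -!span1_mulmx ab. Qed.

Lemma span1_coord0 (a b : V) i : span1 a = span1 b -> b != 0 -> a 0 i = 0 -> b 0 i = 0.
Proof. by move=> ab b0 ai; have [c _ ->] := span1_scaled ab b0; rewrite mxE ai mulr0. Qed.

Lemma ptvec_span1_neq (x y : point) : x != y -> span1 (ptvec x) != span1 (ptvec y).
Proof.
have [_ xE] := ptvecP x; have [_ yE] := ptvecP y.
by apply: contra => /eqP xy; apply/eqP/val_inj; rewrite xE yE.
Qed.

Lemma SU_pair_trans (x y u w : point) : x != y -> u != w -> ptinv x y = ptinv u w ->
  exists2 A, inSU p k A & (fun v => v *m A) @: val x = val u /\ (fun v => v *m A) @: val y = val w.
Proof.
move=> xy uw xyuw; have [xx xE] := ptvecP x; have [yy yE] := ptvecP y.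
have [uu uE] := ptvecP u; have [ww wE] := ptvecP w.
have [A1 [S1 A1x A1y]] := pair_model xx yy (ptvec_span1_neq xy).
have [A2 [S2 A2u A2w]] := pair_model uu ww (ptvec_span1_neq uw).
have A1K z z' : span1 (z *m A1) = span1 z' ->
    (fun v => v *m (invmx A1 *m A2)) @: span1 z' = span1 (z *m A2).
  move=> zz'; rewrite span1_mulmx -(span1_mulmx_eq _ zz').
  by rewrite mulmxA mulmxK // inSU_unit.
rewrite /ptinv in xyuw; rewrite xyuw in A1y.
exists (invmx A1 *m A2); first exact/inSU_mul/S2/inSU_inv.
by rewrite xE yE uE wE (A1K _ _ A1x) (A1K _ _ A1y) A2u A2w.
Qed.

Section Orbitals.
Variable G : {group {perm point}}.
Hypothesis SU_le_G : forall A : 'M[F]_n, inSU p k A -> exists2 s, s \in G &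
  forall z : point, val (s z) = (fun v => v *m A) @: val z.
Hypothesis G_le_GammaU : forall s, s \in G -> exists A i, semisim p k A i /\
  forall z : point, val (s z) = slmap p A i @: val z.

Lemma orbital_ptinv (x y u w : point) :
  x != y -> u != w -> ptinv x y = ptinv u w -> orbital G x y u w.
Proof.
move=> xy uw xyuw; have [A SA [Axu Ayw]] := SU_pair_trans xy uw xyuw.
have [s sG sA] := SU_le_G SA.
have -> : u = s x by apply: val_inj; rewrite sA.
have -> : w = s y by apply: val_inj; rewrite sA.
exact: orbital_act.
Qed.

Lemma orbital_diam_le2 (x y : point) : x != y -> diam_le (orbital G x y) 2.
Proof.
move=> xy u v; have [<-|uv] := eqVneq u v; first by exists [::].
have [uu uE] := ptvecP u; have [vv vE] := ptvecP v.
have [A [SA Au Av]] := pair_model uu vv (ptvec_span1_neq uv).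
have [dd d1] := partner_props (conjq_pinv (ptvec u) (ptvec v)).
have [||w [ww uw wv w3]] := common_neighbour (conjq_pinv (ptvec x) (ptvec y)) dd d1;
  rewrite ?partner_coord ?oo_eq //.
have wA : f (w *m A) (w *m A) != 0 by rewrite SA.1.
pose W := mkpoint wA.
have uA : val u = span1 (evec o0 *m A) by rewrite uE Au.
have vA : val v = span1 (partner (pinv (ptvec u) (ptvec v)) *m A) by rewrite vE Av.
have W_neq (z : point) (a : V) : val z = span1 (a *m A) -> a 0 o3 = 0 -> z != W.
  move=> zA a3; apply: contra_eqN w3 => /eqP zW.
  have wa : span1 a = span1 w by apply: (span1_mulmxK (inSU_unit SA)); rewrite -zA zW.
  by rewrite (span1_coord0 wa _ a3) ?hermxx_neq0_vec // eq_sym oner_eq0.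
apply: (@within2 _ _ _ W); apply: orbital_ptinv => //.
- by apply: (W_neq _ _ uA); rewrite evec_coord oo_eq.
- by rewrite (ptinvE uA (erefl (val W))) pinv_mulmx ?uw //; case: SA.
- by rewrite eq_sym (W_neq _ _ vA) ?partner_coord ?oo_eq.
- by rewrite (ptinvE (erefl (val W)) vA) pinv_mulmx ?wv //; case: SA.
Qed.

Lemma orbital_orth_not_complete : exists x y : point, x != y /\ ~ diam_le (orbital G x y) 1.
Proof.
have ee i : f (evec i) (evec i) != 0 by rewrite herm_evec eqxx oner_eq0.
have [dd d1] := partner_props conjq1.
pose X := mkpoint (ee o0); pose Y := mkpoint (ee o1); pose W := mkpoint dd.
have o1_neq (z : point) (a : V) : val z = span1 a -> a 0 o1 != 0 -> X != z.
  move=> za a1; have a0 : a != 0 by apply: contraNneq a1 => ->; rewrite mxE.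
  apply: contra a1 => /eqP Xz; have Xa : span1 (evec o0) = span1 a by rewrite -za -Xz.
  by rewrite (span1_coord0 Xa a0) // evec_coord oo_eq.
have XY : X != Y by apply: (o1_neq _ (evec o1)); rewrite // evec_coord eqxx oner_eq0.
have XW : X != W by apply: (o1_neq _ (partner 1)).
exists X, Y; split=> // /(_ X W) /(within1_edge XW) /orbitalP[s sG sXY].
have [A [i [SA sA]]] := G_le_GammaU sG.
have e0_img (z : point) : X = s z -> evec o0 \in slmap p A i @: val z.
  by move=> Xsz; rewrite -sA -Xsz mem_span1.
have d_img (z : point) : W = s z -> partner 1 \in slmap p A i @: val z.
  by move=> Wsz; rewrite -sA -Wsz mem_span1.
have e0d : f (evec o0) (partner 1) != 0.
  by rewrite herm_evecl partner_coord0 ?conjq1 ?oner_eq0.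
have e01 : f (evec o0) (evec o1) = 0 by rewrite herm_evec oo_eq.
have : X \in [set s X; s Y] by rewrite sXY set21.
have : W \in [set s X; s Y] by rewrite sXY set22.
case/set2P=> WE; case/set2P=> XE.
- by rewrite XE WE eqxx in XW.
- by rewrite (semisim_orth SA (herm_eq0C e01) (e0_img _ XE) (d_img _ WE)) eqxx in e0d.
- by rewrite (semisim_orth SA e01 (e0_img _ XE) (d_img _ WE)) eqxx in e0d.
- by rewrite XE WE eqxx in XW.
Qed.

End Orbitals.
End FiveDims.
End Space.
End UnitaryGeometry.

Unset Implicit Arguments.
Set Strict Implicit.

Theorem mainTheorem10 (p k n : nat) (F : finFieldType)
  (hp : prime p) (hk : (0 < k)%N) (hF : #|F| = ((p ^ k) ^ 2)%N) (hn : (5 <= n)%N)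
  (G : {group {perm Pt p k F n}})
  (* G is induced on X by a subgroup of GammaU_n(q), i.e. G <= PGammaU_n(q) *)
  (hGup : forall s, s \in G -> exists A i, semisim p k A i /\
            forall x : Pt p k F n, val (s x) = slmap p A i @: val x)
  (* G contains the permutation group PSU_n(q) induced by SU_n(q) on X *)
  (hGlow : forall A : 'M[F]_n, inSU p k A -> exists2 s, s \in G &
            forall x : Pt p k F n, val (s x) = (fun v => v *m A) @: val x)
  (hprim : [primitive G, on [set: Pt p k F n] | 'P]) :
  diamXG_eq G 2.
Proof.
split=> [x y xy|]; first exact: (orbital_diam_le2 hp hk hF hn hGlow xy).
exact: (orbital_orth_not_complete hp hk hF hn hGup).
Qed.
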